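(* Let $\ell,m,n$ be positive integers with $\ell<n$, $m<n$, $\gcd(m,n)=1$, and let $\mathcal{X},\mathcal{Y},\hat{\mathcal{X}},\hat{\mathcal{Y}},\check{\mathcal{X}},\check{\mathcal{Y}}$ be the words defined in the context from $\mathcal{S}=\mathcal{F}[\ell,m,n]$. Then, as words of length $n$, $$\mathcal{F}[\ell,m,n]=\mathcal{X}\mathcal{Y}=\hat{\mathcal{X}}\hat{\mathcal{Y}},\qquad \mathcal{F}[\ell,m,n]^{(\ell d)}=\mathcal{Y}\mathcal{X}=\check{\mathcal{X}}\check{\mathcal{Y}},$$ $$\mathcal{F}[\ell,m,n]^{(-d)}=\mathcal{X}^{\overline0}\mathcal{Y}^{\overline0}=\hat{\mathcal{Y}}\hat{\mathcal{X}},\qquad \mathcal{F}[\ell,m,n]^{((\ell-1)d)}=\mathcal{Y}^{\overline0}\mathcal{X}^{\overline0}=\check{\mathcal{Y}}\check{\mathcal{X}}.$$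
   Context: For positive integers $\ell<n$, $m<n$, $\gcd(m,n)=1$, $\mathcal{F}[\ell,m,n]_i=L$ if $im\bmod n<\ell$ and $R$ otherwise; it has period $n$ and is identified with the word $\mathcal{F}_0\cdots\mathcal{F}_{n-1}$. $d\in\{1,\dots,n-1\}$ is the inverse of $m$ mod $n$. For a sequence $\mathcal{S}$ of period $n$, $\mathcal{S}^{(j)}_i=\mathcal{S}_{i+j}$ (left shift, identified with the word $\mathcal{S}^{(j)}_0\cdots\mathcal{S}^{(j)}_{n-1}$). Words are finite strings over $\{L,R\}$, indexed from $0$; juxtaposition is concatenation; for a word $\mathcal{W}$, $\mathcal{W}^{\overline0}$ is $\mathcal{W}$ with its symbol of index $0$ changed. With $\mathcal{S}=\mathcal{F}[\ell,m,n]$ and all indices of $\mathcal{S}$ taken mod $n$, for an integer $p$ and $q\ge1$ write $\mathcal{S}[p;q]=\mathcal{S}_p\mathcal{S}_{p+1}\cdots\mathcal{S}_{p+q-1}$. Then $\mathcal{X}=\mathcal{S}[0;\ell d\bmod n]$ (the symbols $\mathcal{S}_0\cdots\mathcal{S}_{(\ell d-1)\bmod n}$), $\mathcal{Y}=\mathcal{S}_{\ell d\bmod n}\cdots\mathcal{S}_{n-1}$, $\hat{\mathcal{X}}=\mathcal{S}_0\cdots\mathcal{S}_{n-d-1}$, $\hat{\mathcal{Y}}=\mathcal{S}_{n-d}\cdots\mathcal{S}_{n-1}$, $\check{\mathcal{X}}=\mathcal{S}[\ell d;\,n-d]$ (cyclically from $\mathcal{S}_{\ell d\bmod n}$ to $\mathcal{S}_{((\ell-1)d-1)\bmod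 n}$), and $\check{\mathcal{Y}}=\mathcal{S}[(\ell-1)d;\,d]$ (cyclically from $\mathcal{S}_{(\ell-1)d\bmod n}$ to $\mathcal{S}_{(\ell d-1)\bmod n}$). *)

From mathcomp Require Import all_boot all_order all_algebra.
Set Implicit Arguments. Unset Strict Implicit. Unset Printing Implicit Defensive.

Inductive sym := L | R.

Definition flip_sym (a : sym) : sym := match a with L => R | R => L end.

Definition flip0 (w : seq sym) : seq sym :=
  match w with [::] => [::] | a :: t => flip_sym a :: t end.

Definition Fsym (l m n i : nat) : sym := if (i * m) %% n < l then L else R.

Definition Sz (l m n : nat) (p : int) : sym :=
  Fsym l m n `|(p %% (n%:Z))%Z|%N.

Definition subw (l m n : nat) (p : int) (q : nat) : seq sym :=
  [seq Sz l m n (p + (i%:Z))%R | i <- iota 0 q].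

Definition Fword (l m n : nat) : seq sym := [seq Fsym l m n i | i <- iota 0 n].

(* Shift S^{(j)} identified with the word S^{(j)}_0 ... S^{(j)}_{n-1}. *)
Definition shiftw (l m n : nat) (j : int) : seq sym := subw l m n j n.

From mathcomp Require Import all_boot all_order all_algebra.
From mathcomp Require Import zify.
Import GRing.Theory.

(* Since m d = 1 (mod n), moving an index back by d lowers the rotation value
   i m mod n by exactly one, so S_(i-d) and S_i differ only where i m mod n
   crosses a threshold, 0 or l, i.e. at i = 0 and i = l d (mod n).  The
   unflipped factorizations are rotations of the cyclic word S; the flipped
   ones come from shifting X and Y back by d, each of which meets exactly one
   such break point, at its first letter. *)

Set Implicit Arguments.
Unset Strict Implicit.

Lemma subw_cat l m n p q1 q2 :
  subw l m n p (q1 + q2) = subw l m n p q1 ++ subw l m n (p + q1%:Z)%R q2.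
Proof.
rewrite /subw iotaD map_cat add0n; congr (_ ++ _).
have := iotaDl q1 0 q2; rewrite addn0 => ->; rewrite -map_comp.
by apply: eq_map => i /=; rewrite PoszD addrA.
Qed.

Lemma subw_modz l m n p p' q :
  (p = p' %[mod n%:Z])%Z -> subw l m n p q = subw l m n p' q.
Proof. by move=> e; apply: eq_map => i; rewrite /Sz -modzDml e modzDml. Qed.

Lemma subw_addn l m n p q : subw l m n (p + n%:Z)%R q = subw l m n p q.
Proof. by apply: subw_modz; rewrite modzDr. Qed.

Lemma Fword_subw l m n : Fword l m n = subw l m n 0 n.
Proof.
apply: eq_map => i; rewrite /Sz add0r modz_nat absz_nat.
by rewrite /Fsym modnMml.
Qed.

Lemma subw_split l m n p q : q <= n ->
  subw l m n p n = subw l m n p q ++ subw l m n (p + q%:Z)%R (n - q).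
Proof. by move=> hq; rewrite -subw_cat subnKC. Qed.

Lemma subw_rot l m n p q : q <= n ->
  subw l m n (p + q%:Z)%R n = subw l m n (p + q%:Z)%R (n - q) ++ subw l m n p q.
Proof.
move=> hq; rewrite (subw_split _ _ _ (leq_subr q n)) subKn //.
by rewrite -addrA -PoszD subnKC // subw_addn.
Qed.

Lemma subw_flip0 l m n p p' q : 0 < q ->
  Sz l m n p' = flip_sym (Sz l m n p) ->
  (forall i, 0 < i < q -> Sz l m n (p' + i%:Z)%R = Sz l m n (p + i%:Z)%R) ->
  subw l m n p' q = flip0 (subw l m n p q).
Proof.
case: q => // q _ h0 hi; rewrite /subw /= !addr0 h0; congr (_ :: _).
by apply/eq_in_map => i; rewrite mem_iota => /andP[i1 i2]; apply: hi; lia.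
Qed.

Lemma ltn_succ_mod l n a b : 0 < l < n -> b < n -> (b + 1) %% n = a ->
  (b < l) = (a < l) (+) ((a == 0) || (a == l)).
Proof.
move=> /andP[l0 ln] bn; have [bn1 <-|bn1 <-] := eqVneq (b + 1) n.
  by rewrite bn1 modnn l0 /=; lia.
rewrite modn_small; last by lia.
have [bl|bl] := eqVneq (b + 1) l; first by rewrite bl ltnn orbT /=; lia.
by rewrite orbF addn1 /= addbF; apply/idP/idP; lia.
Qed.

Section ShiftByInverse.

Variables l m n d : nat.
Hypotheses (hl0 : 0 < l) (hln : l < n) (hcop : coprime m n)
  (hmd : m * d = 1 %[mod n]).

Let ld := (l * d) %% n.

Lemma mul_mod_eq0 k : (k * m %% n == 0) = (k %% n == 0).
Proof. by apply: Gauss_dvdl; rewrite coprime_sym. Qed.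

Lemma mul_mod_eql k : (k * m %% n == l) = (k %% n == ld).
Proof.
have hn : l %% n = l by rewrite modn_small.
apply/eqP/eqP => e.
- by rewrite -[k]muln1 -modnMmr -hmd modnMmr mulnA -modnMml e.
- by rewrite -modnMml e modnMml mulnAC -mulnA -modnMmr hmd modnMmr muln1.
Qed.

Lemma ld_gt0 : 0 < ld.
Proof.
by have := mul_mod_eql 0; rewrite mul0n mod0n => e; rewrite lt0n eq_sym -e; lia.
Qed.

Lemma Fsym_pred k k' : k' + d = k %[mod n] ->
  Fsym l m n k' = if (k %% n == 0) || (k %% n == ld)
                  then flip_sym (Fsym l m n k) else Fsym l m n k.
Proof.
move=> e; have n0 : 0 < n by lia.
have hl : 0 < l < n by rewrite hl0.
have succ : (k' * m %% n + 1) %% n = k * m %% n.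
  by rewrite modnDml -modnDmr -hmd modnDmr mulnC -mulnDr mulnC -modnMml e modnMml.
rewrite /Fsym (ltn_succ_mod hl (ltn_pmod _ n0) succ).
by rewrite mul_mod_eq0 mul_mod_eql; case: (_ < l); case: (_ || _).
Qed.

Definition breakpoint (p : int) : bool :=
  (p %% n == 0)%Z || (p %% n == ld%:Z)%Z.

Lemma breakpoint_nat k : k < n -> breakpoint (k%:Z) = (k == 0) || (k == ld).
Proof. by move=> kn; rewrite /breakpoint modz_nat modn_small // !eqz_nat. Qed.

Lemma Sz_subd p : Sz l m n (p - d%:Z)%R =
  if breakpoint p then flip_sym (Sz l m n p) else Sz l m n p.
Proof.
have n0 : 0 < n by lia.
have res_nat q : (q %% n = (absz (q %% n))%:Z)%Z.
  by rewrite gez0_abs // modz_ge0 // eqz_nat -lt0n.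
have res_lt q : absz (q %% n)%Z < n by rewrite -ltz_nat -res_nat ltz_pmod.
rewrite {3}/Sz /breakpoint res_nat -{1 2}(modn_small (res_lt p)) !eqz_nat.
apply: Fsym_pred; apply/eqP; rewrite -eqz_nat -!modz_nat PoszD -!res_nat.
by rewrite modzDml subrK modz_mod.
Qed.

Lemma subw_subd_flip0 p q : 0 < q -> breakpoint p ->
  (forall i, 0 < i < q -> ~~ breakpoint (p + i%:Z)%R) ->
  subw l m n (p - d%:Z)%R q = flip0 (subw l m n p q).
Proof.
move=> q0 bp nbp; apply: subw_flip0 => // [|i hi]; first by rewrite Sz_subd bp.
by rewrite addrAC Sz_subd (negbTE (nbp i hi)).
Qed.

Lemma subw_subd_prefix : subw l m n (- d%:Z)%R ld = flip0 (subw l m n 0 ld).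
Proof.
have gt := ld_gt0; have lt : ld < n by rewrite ltn_pmod //; lia.
rewrite -[(- _)%R]sub0r subw_subd_flip0 ?breakpoint_nat //; first by lia.
by move=> i hi; rewrite add0r breakpoint_nat; lia.
Qed.

Lemma subw_subd_suffix :
  subw l m n (ld%:Z - d%:Z)%R (n - ld) = flip0 (subw l m n ld%:Z (n - ld)).
Proof.
have gt := ld_gt0; have lt : ld < n by rewrite ltn_pmod //; lia.
rewrite subw_subd_flip0 ?breakpoint_nat ?eqxx ?orbT //; first by lia.
by move=> i hi; rewrite -PoszD breakpoint_nat; lia.
Qed.

End ShiftByInverse.

Theorem proposition3p3 (l m n d : nat)
  (hl0 : 0 < l) (hln : l < n) (hm0 : 0 < m) (hmn : m < n)
  (hcop : coprime m n)
  (hd0 : 0 < d) (hdn : d < n) (hmd : m * d = 1 %[mod n]) :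
  let X := subw l m n 0 ((l * d) %% n) in
  let Y := subw l m n ((l * d) %% n)%:Z (n - (l * d) %% n) in
  let Xh := subw l m n 0 (n - d) in
  let Yh := subw l m n (n - d)%:Z d in
  let Xc := subw l m n (l * d)%:Z (n - d) in
  let Yc := subw l m n ((l - 1) * d)%:Z d in
  (Fword l m n = X ++ Y /\ Fword l m n = Xh ++ Yh) /\
  (shiftw l m n (l * d)%:Z = Y ++ X /\ shiftw l m n (l * d)%:Z = Xc ++ Yc) /\
  (shiftw l m n (- (d%:Z))%R = flip0 X ++ flip0 Y /\
   shiftw l m n (- (d%:Z))%R = Yh ++ Xh) /\
  (shiftw l m n ((l - 1) * d)%:Z = flip0 Y ++ flip0 X /\
   shiftw l m n ((l - 1) * d)%:Z = Yc ++ Xc).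
Proof.
move=> X Y Xh Yh Xc Yc; rewrite /shiftw.
have ld_le : (l * d) %% n <= n by rewrite ltnW // ltn_pmod //; lia.
have d_le : d <= n by lia.
have ldd : (l - 1) * d + d = l * d by rewrite mulnBl mul1n subnK // leq_pmull.
have ld_mod : ((l * d)%:Z = ((l * d) %% n)%:Z %[mod n])%Z by rewrite !modz_nat modn_mod.
have subd_mod : (- d%:Z = (n - d)%:Z %[mod n])%Z
  by rewrite -subzn // addrC modzDr.
have pred_mod : (((l - 1) * d)%:Z = ((l * d) %% n)%:Z - d%:Z %[mod n])%Z.
  by rewrite -modzDml -ld_mod modzDml -ldd PoszD addrK.
have Fw := Fword_subw l m n.
have prefix := subw_subd_prefix hl0 hln hcop hmd.
have suffix := subw_subd_suffix hl0 hln hcop hmd.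
split; [split | split; [split | split; split]].
- by rewrite Fw (subw_split _ _ _ ld_le) add0r.
- by rewrite Fw (subw_split _ _ _ (leq_subr d n)) add0r subKn.
- by rewrite (subw_modz _ _ _ ld_mod) -[X in subw _ _ _ X]add0r subw_rot // add0r.
- rewrite (subw_split _ _ _ (leq_subr d n)) subKn //; congr (_ ++ _).
  by rewrite -PoszD -ldd -addnA subnKC // PoszD subw_addn.
- by rewrite (subw_split _ _ _ ld_le) addrC prefix suffix.
- by rewrite (subw_split _ _ _ d_le) addNr (subw_modz _ _ _ subd_mod).
- by rewrite (subw_modz _ _ _ pred_mod) addrC subw_rot // addrC prefix suffix.
- by rewrite (subw_split _ _ _ d_le) -PoszD ldd.
Qed.
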